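(* Given any finite collection of Jordan blocks $J_1,\dots,J_k$, where $J_i$ has eigenvalue $\lambda_i\in\mathbb C$ and size $d_i\ge1$, there exists a purely competitive real matrix $B$ whose Jordan decomposition contains this multiset of Jordan blocks.
   Context: A square real matrix $B$ is purely competitive if $B_{ij}\le0$ for all $i\ne j$ and $B_{ii}=0$ for all $i$. *)

From HB Require Import structures.
From mathcomp Require Import all_boot all_order all_algebra.
From mathcomp Require Import complex.
Set Implicit Arguments. Unset Strict Implicit. Unset Printing Implicit Defensive.
Import Order.TTheory GRing.Theory Num.Theory.
Local Open Scope ring_scope.

Definition purely_competitive (R : realDomainType) (n : nat) (B : 'M[R]_n) : Prop :=
  (forall i j : 'I_n, i != j -> B i j <= 0) /\ (forall i : 'I_n, B i i = 0).

Definition jordan_block (C : nzRingType) (lam : C) (d : nat) : 'M[C]_d :=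
  \matrix_(i < d, j < d)
    (if i == j then lam else if (j : nat) == i.+1 then 1 else 0).

From HB Require Import structures.
From mathcomp Require Import all_boot all_order all_algebra.
From mathcomp Require Import complex.
From mathcomp Require Import lra.
Import Order.TTheory GRing.Theory Num.Theory.
Set Implicit Arguments. Unset Strict Implicit. Unset Printing Implicit Defensive.
Local Open Scope ring_scope.

(* Every complex matrix D, not only a direct sum of Jordan blocks, occurs as a
   diagonal block of the complexification of a purely competitive matrix, up to
   similarity.  Writing D = X + iY, the real matrix A = [X -Y; Y X] is similar
   to diag(D, conj D); the matrix [0 -A; -A 0] is similar to diag(A, -A) and
   has zero diagonal.  Finally any Z with zero diagonal splits as Z = Z+ - Z-
   with Z+, Z- >= 0 entrywise and zero diagonal, and the nonpositive matrix
   [-Z- -Z+; -Z+ -Z-] is similar to diag(Z, -(Z+ + Z-)).  All similarities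
   come from the identity [X Y; Y X] [1 1; -1 1] = [1 1; -1 1] diag(X - Y, X + Y)
   and its complex analogue; their transition matrices are invertible because
   2 is. *)

Lemma unitmx_mulmx_scalar (K : comUnitRingType) n (A B : 'M[K]_n) c :
  A *m B = c%:M -> c \is a GRing.unit -> A \in unitmx.
Proof.
move=> AB_c c_unit; suff /mulmx1_unit[] : A *m (c^-1 *: B) = 1%:M by [].
by rewrite -scalemxAr AB_c scale_scalar_mx mulVr.
Qed.

Lemma block_mx_diag_eq (T : Type) m n (A : 'M[T]_m) (B : 'M[T]_(m, n))
    (C : 'M[T]_(n, m)) (D : 'M[T]_n) x :
  (forall i, A i i = x) -> (forall i, D i i = x) ->
  forall i, block_mx A B C D i i = x.
Proof.
move=> Ax Dx i; rewrite -(splitK i); case: (split i) => i' /=.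
- by rewrite block_mxEul.
- by rewrite block_mxEdr.
Qed.

Lemma block_mxOver (T : Type) (S : {pred T}) m1 m2 n1 n2
    (A : 'M[T]_(m1, n1)) (B : 'M[T]_(m1, n2))
    (C : 'M[T]_(m2, n1)) (D : 'M[T]_(m2, n2)) :
  A \is a mxOver S -> B \is a mxOver S -> C \is a mxOver S -> D \is a mxOver S ->
  block_mx A B C D \is a mxOver S.
Proof.
move=> /mxOverP SA /mxOverP SB /mxOverP SC /mxOverP SD.
apply/mxOverP => i j; rewrite -(splitK i) -(splitK j).
case: (split i) => i'; case: (split j) => j' /=.
- by rewrite block_mxEul.
- by rewrite block_mxEur.
- by rewrite block_mxEdl.
- by rewrite block_mxEdr.
Qed.

Section BlockSimilarity.
Variables (K : comUnitRingType) (n : nat).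
Implicit Types X Y : 'M[K]_n.

Lemma scalar2_mx : (2%:R : K)%:M = 1%:M + 1%:M :> 'M[K]_n.
Proof. by apply/matrixP => i j; rewrite !mxE -mulrnDl. Qed.

Lemma swap_block_similar X Y :
  block_mx X Y Y X *m block_mx 1%:M 1%:M (- 1%:M) 1%:M =
  block_mx 1%:M 1%:M (- 1%:M) 1%:M *m block_mx (X - Y) 0 0 (X + Y).
Proof.
rewrite !mulmx_block ?mulmxN ?mulNmx ?mulmx1 ?mul1mx ?mulmx0 ?mul0mx.
by rewrite !addr0 !add0r oppr0 add0r opprB [Y + X]addrC.
Qed.

Lemma swap_block_unitmx : (2%:R : K) \is a GRing.unit ->
  (block_mx 1%:M 1%:M (- 1%:M) 1%:M : 'M[K]_(n + n)) \in unitmx.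
Proof.
apply: (@unitmx_mulmx_scalar _ _ _ (block_mx 1%:M (- 1%:M) 1%:M 1%:M)).
rewrite mulmx_block !mulmxN !mulNmx !mulmx1 (scalar_mx_block n n).
by rewrite addNr opprK scalar2_mx.
Qed.

Section ImaginaryUnit.
Variables (i : K) (sqr_i : i * i = -1).

Lemma realify_block_similar X Y :
  block_mx X (- Y) Y X *m block_mx 1%:M 1%:M (- i%:M) i%:M =
  block_mx 1%:M 1%:M (- i%:M) i%:M *m block_mx (X + i *: Y) 0 0 (X - i *: Y).
Proof.
rewrite !mulmx_block ?mulmxN ?mulNmx ?mulmx1 ?mul1mx ?mulmx0 ?mul0mx.
rewrite !mul_mx_scalar !mul_scalar_mx !addr0 !add0r !opprK oppr0.
rewrite scalerDr scalerBr !scalerA sqr_i !scaleN1r opprK.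
by rewrite add0r opprB [i *: X + Y]addrC.
Qed.

Lemma realify_block_unitmx : (2%:R : K) \is a GRing.unit ->
  (block_mx 1%:M 1%:M (- i%:M) i%:M : 'M[K]_(n + n)) \in unitmx.
Proof.
apply: (@unitmx_mulmx_scalar _ _ _ (block_mx 1%:M i%:M 1%:M (- i%:M))).
rewrite mulmx_block !mulmxN !mulNmx !mulmx1 !mul1mx (scalar_mx_block n n).
by rewrite -scalar_mxM sqr_i addNr subrr raddfN /= opprK scalar2_mx.
Qed.

End ImaginaryUnit.
End BlockSimilarity.

Section CornerSimilar.
Variable K : comUnitRingType.

Definition corner_similar s n (D : 'M[K]_s) (X : 'M[K]_n) :=
  exists m (e : n = (s + m)%N) (M : 'M[K]_m) (P : 'M[K]_(s + m)),
    P \in unitmx /\ castmx (e, e) X *m P = P *m block_mx D 0 0 M.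

Lemma castmx_mul n n' (e : n = n') (A B : 'M[K]_n) :
  castmx (e, e) (A *m B) = castmx (e, e) A *m castmx (e, e) B.
Proof. by case: n' / e; rewrite !castmx_id. Qed.

Lemma castmx_unitmx n n' (e : n = n') (A : 'M[K]_n) :
  (castmx (e, e) A \in unitmx) = (A \in unitmx).
Proof. by case: n' / e; rewrite castmx_id. Qed.

Lemma corner_similar_trans s a b (D : 'M[K]_s) (Y : 'M[K]_a)
    (X H : 'M[K]_(a + b)) (N : 'M[K]_b) :
  corner_similar D Y -> H \in unitmx -> X *m H = H *m block_mx Y 0 0 N ->
  corner_similar D X.
Proof.
case=> m [e [M [P [P_unit YP]]]] H_unit XH; subst a; rewrite castmx_id in YP.
pose e' := esym (addnA s m b).
exists (m + b)%N, e', (block_mx M 0 0 N),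
  (castmx (e', e') (H *m block_mx P 0 0 1%:M)); split.
  by rewrite castmx_unitmx unitmx_mul H_unit unitmxE det_ublock det1 mulr1 -unitmxE.
(* diag(diag(D, M), N) and diag(D, diag(M, N)) differ only by the cast [e']. *)
have := @block_mxA _ s m b s m b D 0 0 0 M 0 0 0 N.
rewrite /= !row_mx0 !col_mx0 => ->.
rewrite -!castmx_mul; congr castmx.
rewrite mulmxA XH -!mulmxA; congr (H *m _).
by rewrite !mulmx_block !mulmx0 !mul0mx !addr0 !add0r mulmx1 mul1mx YP.
Qed.

Lemma corner_similar_swap_block s n (D : 'M[K]_s) (X Y : 'M[K]_n) :
  (2%:R : K) \is a GRing.unit -> corner_similar D (X - Y) ->
  corner_similar D (block_mx X Y Y X).
Proof.
move=> unit2 DXY; apply: (corner_similar_trans DXY (swap_block_unitmx n unit2)).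
exact: swap_block_similar.
Qed.

End CornerSimilar.

Section Competitive.
Variable R : rcfType.
Local Notation rc := (real_complex R).

Definition realify s (D : 'M[R[i]]_s) : 'M[R]_(s + s) :=
  block_mx (map_mx (@complex.Re R) D) (- map_mx (@complex.Im R) D)
           (map_mx (@complex.Im R) D) (map_mx (@complex.Re R) D).

Definition pos_part_mx m n (Z : 'M[R]_(m, n)) := map_mx (fun x => Num.max x 0) Z.
Definition neg_part_mx m n (Z : 'M[R]_(m, n)) := map_mx (fun x => Num.max (- x) 0) Z.

Definition competitive_dilation n (Z : 'M[R]_n) : 'M[R]_(n + n) :=
  block_mx (- neg_part_mx Z) (- pos_part_mx Z) (- pos_part_mx Z) (- neg_part_mx Z).

Lemma unit2_complex : (2%:R : R[i]) \is a GRing.unit.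
Proof. by rewrite unitfE pnatr_eq0. Qed.

Lemma corner_similar_realify s (D : 'M[R[i]]_s) :
  corner_similar D (map_mx rc (realify D)).
Proof.
have sqr_i : ('i%C : R[i]) * 'i%C = -1 by rewrite -expr2 sqr_i.
pose X := map_mx (fun z => rc (complex.Re z)) D.
pose Y := map_mx (fun z => rc (complex.Im z)) D.
exists s, erefl, (X - 'i%C *: Y), (block_mx 1%:M 1%:M (- ('i%C)%:M) ('i%C)%:M).
split; first exact: realify_block_unitmx sqr_i unit2_complex.
have -> : map_mx rc (realify D) = block_mx X (- Y) Y X.
  by rewrite map_block_mx map_mxN -!map_mx_comp.
have {1}-> : D = X + 'i%C *: Y.
  by apply/matrixP => a b; rewrite !mxE; exact: complexE.
by rewrite castmx_id realify_block_similar.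
Qed.

Lemma pos_part_mxB m n (Z : 'M[R]_(m, n)) : pos_part_mx Z - neg_part_mx Z = Z.
Proof.
apply/matrixP => a b; rewrite !mxE.
by case: (ger0P (Z a b)); case: (ger0P (- Z a b)); lra.
Qed.

Lemma competitive_dilation_purely_competitive n (Z : 'M[R]_n) :
  (forall a, Z a a = 0) -> purely_competitive (competitive_dilation Z).
Proof.
move=> Z_diag0; split=> [a b _ | a].
  have : competitive_dilation Z \is a mxOver Num.npos.
    apply: block_mxOver; apply/mxOverP => ? ?;
    by rewrite !mxE nposrE oppr_le0 le_max lexx orbT.
  by move/mxOverP/(_ a b); rewrite nposrE.
by apply: block_mx_diag_eq => a'; rewrite !mxE Z_diag0 oppr0 maxxx oppr0.
Qed.

Lemma corner_similar_competitive_dilation s n (D : 'M[R[i]]_s) (Z : 'M[R]_n) :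
  corner_similar D (map_mx rc Z) ->
  corner_similar D (map_mx rc (competitive_dilation Z)).
Proof.
move=> DZ; rewrite map_block_mx; apply: corner_similar_swap_block unit2_complex _.
by rewrite -map_mxB opprK addrC pos_part_mxB.
Qed.

Lemma corner_similar_competitive s (D : 'M[R[i]]_s) :
  exists n (B : 'M[R]_n), purely_competitive B /\ corner_similar D (map_mx rc B).
Proof.
pose A := realify D; pose Z := block_mx 0 (- A) (- A) 0.
exists _, (competitive_dilation Z); split.
  apply: competitive_dilation_purely_competitive.
  by apply: block_mx_diag_eq => a; rewrite mxE.
apply: corner_similar_competitive_dilation.
rewrite map_block_mx map_mx0; apply: corner_similar_swap_block unit2_complex _.
by rewrite sub0r map_mxN opprK; exact: corner_similar_realify.
Qed.

End Competitive.

Lemma purely_competitive_castmx (R : realDomainType) n n' (e : n = n')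
    (B : 'M[R]_n) :
  purely_competitive B -> purely_competitive (castmx (e, e) B).
Proof. by case: n' / e; rewrite castmx_id. Qed.

Theorem lemma9 (R : rcfType) (k : nat) (lam : 'I_k -> R[i]) (d : 'I_k -> nat)
    (hd : forall i, (0 < d i)%N) :
  exists (m : nat) (B : 'M[R]_(\sum_(i < k) d i + m)),
    purely_competitive B /\
    exists (M : 'M[R[i]]_m) (P : 'M[R[i]]_(\sum_(i < k) d i + m)),
      P \in unitmx /\
      map_mx (real_complex R) B *m P =
      P *m block_mx (\mxdiag_(i < k) jordan_block (lam i) (d i)) 0 0 M.
Proof.
have [n [B [B_comp [m [e [M [P [P_unit BP]]]]]]]] :=
  corner_similar_competitive (\mxdiag_(i < k) jordan_block (lam i) (d i)).
exists m, (castmx (e, e) B); split; first exact: purely_competitive_castmx.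
by exists M, P; rewrite map_castmx; split.
Qed.
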